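(* Let $X$ be an $n$-dimensional toric Fano variety with fan $\Sigma_X$. Suppose that for every generator $x\in G(\Sigma_X)$ there are at most two primitive collections of order two containing $x$, and if there are exactly two, they are $\{x,-x\}$ and $\{x,y\}$ with $-y\notin G(\Sigma_X)$ and $-x-y\notin G(\Sigma_X)$. Then $\Sigma_X$ has at most $\frac{3}{4}f_0$ primitive collections of order two, i.e. $\binom{f_0}{2}-f_1\leq\frac34 f_0$, where $f_0$ is the number of rays and $f_1$ the number of $2$-dimensional cones of $\Sigma_X$.
   Context: $X$ is a smooth projective toric variety with ample anticanonical divisor, fan $\Sigma_X$, primitive ray generators $G(\Sigma_X)$. A primitive collection is a set of generators not spanning a cone of $\Sigma_X$ while every proper subset does; its order is its cardinality. (A set of two generators is a primitive collection exactly when they do not span a cone of $\Sigma_X$.) *)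

(* Combinatorial encoding of a smooth projective toric
   variety with ample anticanonical divisor via its fan. *)
From HB Require Import structures.
From mathcomp Require Import all_boot all_order all_algebra.
Set Implicit Arguments. Unset Strict Implicit. Unset Printing Implicit Defensive.
Import Order.TTheory GRing.Theory Num.Theory.
Local Open Scope ring_scope.

(* Fan: given by its set of maximal cones S : {set {set 'I_m}}; a cone is
   spanned by a subset of the generators.  The cones of the fan are the
   faces (= subsets, the fan being simplicial) of the maximal cones. *)

Definition ratv (n : nat) (x : 'rV[int]_n) : 'rV[rat]_n := map_mx (fun z => z%:~R) x.

Definition cone (n m : nat) (v : 'I_m -> 'rV[int]_n) (A : {set 'I_m})
    (x : 'rV[rat]_n) : Prop :=
  exists lam : 'I_m -> rat,
    (forall i, 0 <= lam i) /\ (forall i, i \notin A -> lam i = 0) /\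
    x = \sum_i lam i *: ratv (v i).

Definition dotr (n : nat) (u w : 'rV[rat]_n) : rat := (u *m w^T) 0 0.

Definition smooth_complete_fan (n m : nat) (v : 'I_m -> 'rV[int]_n)
    (S : {set {set 'I_m}}) : Prop :=
  injective v /\
  (forall i, exists2 s, s \in S & i \in s) /\
  (forall s, s \in S -> exists f : 'I_n -> 'I_m,
      [set f k | k in 'I_n] = s /\
      (\det (\matrix_(k < n, j < n) v (f k) 0 j) = 1 \/
       \det (\matrix_(k < n, j < n) v (f k) 0 j) = -1)) /\
  (forall s t, s \in S -> t \in S ->
      forall x, cone v s x -> cone v t x -> cone v (s :&: t) x) /\
  (* completeness: the support of the fan is all of R^n (equivalently Q^n) *)
  (forall x : 'rV[rat]_n, exists2 s, s \in S & cone v s x).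

(* Ampleness of the anticanonical divisor -K = sum_rho D_rho, via its
   Cartier data: for each maximal cone s there is m_s with <m_s,v_i> = -1
   for i in s, and ampleness means <m_s,v_j> > -1 for j not in s.
   (Here u = -m_s.) *)
Definition anticanonical_ample (n m : nat) (v : 'I_m -> 'rV[int]_n)
    (S : {set {set 'I_m}}) : Prop :=
  forall s, s \in S -> exists u : 'rV[rat]_n,
    (forall i, i \in s -> dotr u (ratv (v i)) = 1) /\
    (forall j, j \notin s -> dotr u (ratv (v j)) < 1).

Definition smooth_fano_fan (n m : nat) (v : 'I_m -> 'rV[int]_n)
    (S : {set {set 'I_m}}) : Prop :=
  smooth_complete_fan v S /\ anticanonical_ample v S.

Definition spans_cone (m : nat) (S : {set {set 'I_m}}) (A : {set 'I_m}) : bool :=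
  [exists s in S, A \subset s].

Definition primitive_collection (m : nat) (S : {set {set 'I_m}}) (A : {set 'I_m}) : bool :=
  ~~ spans_cone S A && [forall B : {set 'I_m}, (B \proper A) ==> spans_cone S B].

Definition prim2_partners (m : nat) (S : {set {set 'I_m}}) (i : 'I_m) : {set 'I_m} :=
  [set j | (j != i) && primitive_collection S [set i; j]].

Definition prim2_collections (m : nat) (S : {set {set 'I_m}}) : {set {set 'I_m}} :=
  [set A : {set 'I_m} | (#|A| == 2)%N && primitive_collection S A].

Definition f1 (m : nat) (S : {set {set 'I_m}}) : nat :=
  #|[set A : {set 'I_m} | (#|A| == 2)%N && spans_cone S A]|.

(* The graph on G(Sigma_X) whose edges are the primitive collections of
   order two has maximal degree 2.  If x has degree 2, its partners are -x
   and some y with -y not a generator; then y has degree exactly 1, since a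
   second partner of y would have to be -y.  A vertex of degree 1 has only
   one partner, so x |-> y injects the vertices of degree 2 into those of
   degree 1, whence d_2 <= d_1, and the degree sum d_1 + 2 d_2 is at most
   3/2 f_0.  By the handshake lemma this bounds the number of edges by
   3/4 f_0.  Finally every pair of generators either spans a 2-cone or is
   a primitive collection, since every single generator spans a ray. *)
From mathcomp Require Import all_boot all_order all_algebra.
From mathcomp Require Import lra.
Set Implicit Arguments.
Unset Strict Implicit.
Import GRing.Theory Num.Theory.
Local Open Scope ring_scope.

Lemma sum_nat_bool (T : finType) (P : pred T) :
  (\sum_x (P x : nat) = #|[set x | P x]|)%N.
Proof. by rewrite -sum1dep_card [RHS]big_mkcond; apply: eq_bigr => x _; case: (P x). Qed.

Lemma double_sum_le_triple_card (T : finType) (d : T -> nat) :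
  (forall x, d x <= 2)%N ->
  (#|[set x | d x == 2%N]| <= #|[set x | d x == 1%N]|)%N ->
  (2 * \sum_x d x <= 3 * #|T|)%N.
Proof.
move=> d_le2 d2_le_d1.
have pointwise x : (2 * d x + (d x == 1%N) <= 3 + (d x == 2%N))%N.
  by move: (d_le2 x); case: (d x) => [|[|[|?]]].
have : (\sum_x (2 * d x + (d x == 1%N)) <= \sum_x (3 + (d x == 2%N)))%N.
  by apply: leq_sum => x _; apply: pointwise.
rewrite big_split [X in (_ <= X)%N]big_split /= -big_distrr /= !sum_nat_bool.
have -> : (\sum_(x : T) 3 = 3 * #|T|)%N by rewrite sum_nat_const mulnC.
move=> bound; rewrite -(leq_add2r #|[set x | d x == 1%N]|).
by apply: leq_trans bound _; rewrite leq_add2l.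
Qed.

Section SymmetricNeighbourhoods.
Variables (T : finType) (N : T -> {set T}).
Hypothesis N_sym : forall x y, (y \in N x) = (x \in N y).

Lemma card_deg2_le_deg1 :
  (forall x, #|N x| = 2%N -> exists2 y, y \in N x & #|N y| = 1%N) ->
  (#|[set x | #|N x| == 2%N]| <= #|[set x | #|N x| == 1%N]|)%N.
Proof.
move=> leaf_nbr.
pose leaf x := odflt x [pick y in N x | #|N y| == 1%N].
have leafP x : #|N x| = 2%N -> leaf x \in N x /\ #|N (leaf x)| = 1%N.
  move=> /leaf_nbr[y yNx Ny1]; rewrite /leaf.
  case: pickP => [z /andP[zNx /eqP Nz1] // | /(_ y)].
  by rewrite yNx Ny1 eqxx.
rewrite -(card_in_imset (f := leaf)).
  apply/subset_leq_card/subsetP => y /imsetP[x]; rewrite inE => /eqP/leafP[_ leaf1] ->.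
  by rewrite inE leaf1.
move=> x1 x2; rewrite !inE => /eqP/leafP[x1N /eqP/cards1P[z Nz]] /eqP/leafP[x2N _] eq_leaf.
move: x1N x2N; rewrite -eq_leaf (N_sym x1) (N_sym x2) Nz !inE.
by move=> /eqP -> /eqP ->.
Qed.

End SymmetricNeighbourhoods.

Section PrimitiveCollectionsOfOrderTwo.
Variables (m : nat) (S : {set {set 'I_m}}).

Lemma prim2_partnersC i j :
  (j \in prim2_partners S i) = (i \in prim2_partners S j).
Proof. by rewrite !inE eq_sym setUC. Qed.

Lemma card_prim2_collections_mem x :
  #|[set A in prim2_collections S | x \in A]| = #|prim2_partners S x|.
Proof.
have -> : [set A in prim2_collections S | x \in A] =
          (fun j => [set x; j]) @: prim2_partners S x.
  apply/setP => A; rewrite !inE; apply/andP/imsetP.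
  - case=> /andP[/cards2P[a [b [ab ->]]] primA].
    rewrite !inE => /orP[]/eqP ->.
      by exists b; rewrite // inE eq_sym ab.
    by exists a; [rewrite inE ab setUC | exact: setUC].
  - case=> j; rewrite inE => /andP[jx primj] ->.
    by rewrite cards2 [x == j]eq_sym jx primj !inE eqxx.
apply: card_in_imset => j k; rewrite !inE => /andP[jx _] /andP[kx _] eq_jk.
have : k \in [set x; j] by rewrite eq_jk !inE eqxx orbT.
by rewrite !inE (negbTE kx) => /eqP.
Qed.

Lemma handshake_prim2 :
  (2 * #|prim2_collections S| = \sum_x #|prim2_partners S x|)%N.
Proof.
rewrite mulnC -sum_nat_const.
transitivity (\sum_(A in prim2_collections S) \sum_(x in A) 1)%N.
  by apply: eq_bigr => A; rewrite inE sum1_card => /andP[/eqP -> _].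
rewrite (exchange_big_dep predT) //=.
apply: eq_bigr => x _; rewrite sum1dep_card -card_prim2_collections_mem.
by apply: eq_card => A; rewrite !inE.
Qed.

Lemma spans_coneS (A B : {set 'I_m}) : B \subset A -> spans_cone S A -> spans_cone S B.
Proof.
move=> BA /existsP[s /andP[sS As]]; apply/existsP; exists s.
by rewrite sS (subset_trans BA As).
Qed.

Hypothesis generators_are_rays : forall i, exists2 s, s \in S & i \in s.

Lemma spans_cone1 i : spans_cone S [set i].
Proof.
by case: (generators_are_rays i) => s sS s_i; apply/existsP; exists s; rewrite sS sub1set.
Qed.

Lemma primitive_collection_card2 (A : {set 'I_m}) :
  #|A| = 2%N -> primitive_collection S A = ~~ spans_cone S A.
Proof.
move=> /eqP/cards2P[a [b [ab ->]]]; rewrite /primitive_collection andb_idr // => _.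
apply/forallP => B; apply/implyP => /proper_card.
rewrite cards2 ab ltnS leq_eqVlt ltnS leqn0.
case/orP => [/cards1P[j ->] | /eqP/cards0_eq ->]; first exact: spans_cone1.
exact: spans_coneS (sub0set _) (spans_cone1 a).
Qed.

Lemma binomial_f1_prim2 : 'C(m, 2) = (f1 S + #|prim2_collections S|)%N.
Proof.
rewrite -{1}(card_ord m) -card_draws.
rewrite -(cardsID [set A : {set 'I_m} | spans_cone S A]).
congr (_ + _)%N; apply: eq_card => A; rewrite !inE //.
by rewrite andbC; apply: andb_id2l => /eqP/primitive_collection_card2 ->.
Qed.

End PrimitiveCollectionsOfOrderTwo.

Section DegreeBound.
Variables (n m : nat) (v : 'I_m -> 'rV[int]_n) (S : {set {set 'I_m}}).
Hypothesis prim2_deg_le2 : forall x, (#|prim2_partners S x| <= 2)%N.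
Hypothesis prim2_deg2_opp : forall x, #|prim2_partners S x| = 2%N ->
  exists x' y, [/\ prim2_partners S x = [set x'; y], v x' = - v x &
                   forall k, v k <> - v y].

Lemma prim2_deg2_leaf_partner x :
  #|prim2_partners S x| = 2%N ->
  exists2 y, y \in prim2_partners S x & #|prim2_partners S y| = 1%N.
Proof.
move=> /prim2_deg2_opp[x' [y [Px _ no_opp_y]]].
have yPx : y \in prim2_partners S x by rewrite Px !inE eqxx orbT.
exists y => //.
have : (0 < #|prim2_partners S y|)%N by apply/card_gt0P; exists x; rewrite -prim2_partnersC.
case deg_y: #|prim2_partners S y| (prim2_deg_le2 y) => [|[|[|?]]] // _ _.
by case: (prim2_deg2_opp deg_y) => z [w [_ vz _]]; case: (no_opp_y z vz).
Qed.

Lemma double_sum_prim2_partners_le :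
  (2 * \sum_x #|prim2_partners S x| <= 3 * m)%N.
Proof.
rewrite -[X in (_ <= 3 * X)%N]card_ord.
apply: double_sum_le_triple_card => //.
exact: card_deg2_le_deg1 (@prim2_partnersC m S) prim2_deg2_leaf_partner.
Qed.

End DegreeBound.

Theorem lemma3p4 (n m : nat) (v : 'I_m -> 'rV[int]_n) (S : {set {set 'I_m}}) :
  smooth_fano_fan v S ->
  (forall x : 'I_m,
     (#|prim2_partners S x| <= 2)%N /\
     (#|prim2_partners S x| = 2%N ->
        exists x' y : 'I_m,
          prim2_partners S x = [set x'; y] /\
          v x' = - v x /\
          (forall k, v k <> - v y) /\
          (forall k, v k <> - v x - v y))) ->
  (4 * #|prim2_collections S| <= 3 * m)%N /\
  ('C(m, 2)%:R - (f1 S)%:R <= (3 / 4 : rat) * m%:R).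
Proof.
move=> [[_ [rays _]] _] partners_spec.
have deg_le2 x := (partners_spec x).1.
have deg2_opp x (deg2 : #|prim2_partners S x| = 2%N) :
    exists x' y, [/\ prim2_partners S x = [set x'; y], v x' = - v x &
                     forall k, v k <> - v y].
  by have [x' [y [? [? [? _]]]]] := (partners_spec x).2 deg2; exists x', y.
have prim2_le : (4 * #|prim2_collections S| <= 3 * m)%N.
  by rewrite -[4%N]/(2 * 2)%N -mulnA handshake_prim2 (double_sum_prim2_partners_le deg_le2 deg2_opp).
split=> //.
rewrite (binomial_f1_prim2 rays) natrD addrAC subrr add0r.
move: prim2_le; rewrite -(ler_nat rat) !natrM; lra.
Qed.
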